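(* Let $R$ be a Noetherian integral domain containing $\mathbb{F}_q$, with field of fractions $K$, and let $A\in\mathrm{GL}_n(R)$. Then for every solution $X\in K_{\mathrm{sep}}^n$ of the system $AX^{(q)}=X$, the coordinates of $X$ are integral over $R$.
   Context: $K_{\mathrm{sep}}$ is a separable closure of $K$ (all solutions in an algebraic closure lie there); $X^{(q)}$ denotes the vector obtained by raising each coordinate to the $q$-th power; $\mathrm{GL}_n(R)$ is the group of $n\times n$ matrices over $R$ invertible over $R$. *)

From HB Require Import structures.
From mathcomp Require Import all_boot all_order all_algebra all_field.
Set Implicit Arguments. Unset Strict Implicit. Unset Printing Implicit Defensive.
Import GRing.Theory.
Local Open Scope ring_scope.

Definition is_ideal (R : comNzRingType) (I : R -> Prop) : Prop :=
  [/\ I 0, (forall x y, I x -> I y -> I (x + y)) & (forall r x, I x -> I (r * x))].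

Definition noetherian (R : comNzRingType) : Prop :=
  forall I : nat -> R -> Prop,
    (forall m, is_ideal (I m)) ->
    (forall m x, I m x -> I m.+1 x) ->
    exists N : nat, forall m x, (N <= m)%N -> I m x -> I N x.

Definition contains_Fq (R : nzRingType) (q : nat) : Prop :=
  exists (F : finFieldType) (f : {rmorphism F -> R}), #|F| = q.

Definition integral_over (R : comNzRingType) (L : fieldType)
  (iota : {rmorphism R -> L}) (x : L) : Prop :=
  exists p : {poly R}, p \is monic /\ root (map_poly iota p) x.

(* L, together with the injective embedding iota : R -> L, is a separable
   closure of the fraction field K = Frac(R):
   - every element of L is a root of a nonzero separable polynomial with
     coefficients in K (equivalently, after clearing denominators, in R),
     i.e. L is separable algebraic over K (and K embeds in L via iota);
   - L is separably closed: every nonconstant separable polynomial over L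
     has a root in L. *)
Definition is_sep_closure_of_frac (R : idomainType) (L : fieldType)
  (iota : {rmorphism R -> L}) : Prop :=
  [/\ injective iota,
      (forall x : L, exists p : {poly R},
          p != 0 /\ separable_poly (map_poly iota p) /\ root (map_poly iota p) x)
    & (forall p : {poly L}, (1 < size p)%N -> separable_poly p ->
          exists x : L, root p x)].

From HB Require Import structures.
From mathcomp Require Import all_boot all_order all_algebra all_field.
Set Implicit Arguments. Unset Strict Implicit.
Import GRing.Theory.
Local Open Scope ring_scope.

(* Write B = A^-1, so that x_j^q = sum_k B_jk x_k.  Using these relations to lower
   exponents, every monomial in the x_j is an R-linear combination of the
   finitely many monomials whose exponents are all < q (here q >= 2 matters).
   The R-module M they span thus contains 1 and is stable under multiplication
   by each x_i, so x_i is an eigenvalue of an R-matrix acting on generators of M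
   and hence a root of its (monic) characteristic polynomial. *)

Section IntegralityFromFiniteModule.

Variables (R : comNzRingType) (L : fieldType) (iota : {rmorphism R -> L}).

Definition in_rspan (I : finType) (v : I -> L) (y : L) : Prop :=
  exists c : I -> R, y = \sum_k iota (c k) * v k.

Variables (I : finType) (v : I -> L).

Lemma in_rspan0 : in_rspan v 0.
Proof. by exists (fun=> 0); rewrite big1 // => k _; rewrite rmorph0 mul0r. Qed.

Lemma in_rspanD y z : in_rspan v y -> in_rspan v z -> in_rspan v (y + z).
Proof.
move=> [c ->] [d ->]; exists (fun k => c k + d k).
by rewrite -big_split; apply: eq_bigr => k _; rewrite rmorphD mulrDl.
Qed.

Lemma in_rspanZ r y : in_rspan v y -> in_rspan v (iota r * y).
Proof.
move=> [c ->]; exists (fun k => r * c k).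
by rewrite mulr_sumr; apply: eq_bigr => k _; rewrite rmorphM mulrA.
Qed.

Lemma in_rspan_sum (J : finType) (F : J -> L) :
  (forall j, in_rspan v (F j)) -> in_rspan v (\sum_j F j).
Proof.
by move=> hF; apply: (big_ind (in_rspan v)) => //; [exact: in_rspan0 | exact: in_rspanD].
Qed.

Lemma in_rspan_gen k : in_rspan v (v k).
Proof.
exists (fun l => (l == k)%:R); rewrite (bigD1 k) //= big1 ?addr0.
  by rewrite eqxx rmorph1 mul1r.
by move=> l /negbTE ->; rewrite rmorph0 mul0r.
Qed.

Lemma integral_over_of_rspan_stable x k0 :
  v k0 != 0 -> (forall k, in_rspan v (x * v k)) -> integral_over iota x.
Proof.
move=> vk0 /fin_all_exists[C hC].
pose M := \matrix_(k < #|I|, l < #|I|) C (enum_val l) (enum_val k).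
exists (char_poly M); split; first exact: char_poly_monic.
rewrite map_char_poly -eigenvalue_root_char; apply/eigenvalueP.
exists (\row_k v (enum_val k)); last first.
  by apply/negP => /eqP/rowP/(_ (enum_rank k0)); rewrite !mxE enum_rankK; apply/eqP.
apply/rowP => l; rewrite !mxE hC (big_enum_val (fun k => iota _ * v k)) /=.
by apply: eq_bigr => k _; rewrite !mxE mulrC.
Qed.

End IntegralityFromFiniteModule.

Section Monomials.

Variables (L : fieldType) (n : nat) (x : 'I_n -> L).

Definition monomial (e : 'I_n -> nat) : L := \prod_j x j ^+ e j.

Lemma mul_monomial k e :
  x k * monomial e = monomial (fun j => (e j + (j == k))%N).
Proof.
rewrite /monomial [RHS](eq_bigr (fun j => x j ^+ e j * x j ^+ (j == k))); last first.
  by move=> j _; rewrite exprD.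
rewrite big_split /= mulrC; congr (_ * _).
by rewrite (bigD1 k) //= eqxx expr1 big1 ?mulr1 // => j /negbTE ->; rewrite expr0.
Qed.

Definition lower_exponent (e : 'I_n -> nat) i m j : nat :=
  if j == i then (e i - m)%N else e j.

Lemma monomial_lower_exponent e i m : (m <= e i)%N ->
  monomial e = x i ^+ m * monomial (lower_exponent e i m).
Proof.
move=> me; rewrite /monomial (bigD1 i) //= [in RHS](bigD1 i) //= /lower_exponent eqxx.
rewrite mulrA -exprD subnKC //; congr (_ * _).
by apply: eq_bigr => j /negbTE ->.
Qed.

Lemma sum_lower_exponent e i m : (m <= e i)%N ->
  (\sum_j lower_exponent e i m j + m = \sum_j e j)%N.
Proof.
move=> me; rewrite [RHS](bigD1 i) // [X in (X + _)%N](bigD1 i) //= /lower_exponent eqxx.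
rewrite addnAC subnK //; congr (_ + _)%N.
by apply: eq_bigr => j /negbTE ->.
Qed.

End Monomials.

Lemma sum_delta n (k : 'I_n) : (\sum_(j < n) (j == k) = 1)%N.
Proof. by rewrite (bigD1 k) //= eqxx big1 // => j /negbTE ->. Qed.

Section FrobeniusReduction.

Variables (R : comNzRingType) (L : fieldType) (iota : {rmorphism R -> L}).
Variables (q n : nat) (x : 'I_n -> L) (B : 'M[R]_n).
Hypothesis q_gt1 : (1 < q)%N.
Hypothesis frobB : forall i, x i ^+ q = \sum_k iota (B i k) * x k.

Definition reduced_monomial (f : {ffun 'I_n -> 'I_q}) : L :=
  monomial x (fun j => f j).

Lemma monomial_in_reduced_span e : in_rspan iota reduced_monomial (monomial x e).
Proof.
have [d] := ubnP (\sum_j e j); elim: d e => // d IH e; rewrite ltnS => ed.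
have [/forallP e_lt | /forallPn[i]] := boolP [forall j, e j < q]%N.
  have -> : monomial x e = reduced_monomial [ffun j => Ordinal (e_lt j)].
    by apply: eq_bigr => j _; rewrite ffunE.
  exact: in_rspan_gen.
rewrite -leqNgt => qe.
rewrite (monomial_lower_exponent x qe) frobB mulr_suml; apply: in_rspan_sum => k.
rewrite -mulrA; apply: in_rspanZ; rewrite mul_monomial; apply: IH.
rewrite big_split /= sum_delta; apply: leq_trans ed.
by rewrite -(sum_lower_exponent qe) -addnS leq_add2l.
Qed.

Lemma reduced_span_mul_stable i f :
  in_rspan iota reduced_monomial (x i * reduced_monomial f).
Proof. by rewrite /reduced_monomial mul_monomial; apply: monomial_in_reduced_span. Qed.

Lemma integral_over_frobenius_fixed i : integral_over iota (x i).
Proof.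
have q_gt0 : (0 < q)%N by apply: ltnW.
apply: (integral_over_of_rspan_stable (v := reduced_monomial) (k0 := [ffun=> Ordinal q_gt0])).
  by rewrite /reduced_monomial /monomial big1 ?oner_neq0 // => j _; rewrite ffunE.
exact: reduced_span_mul_stable.
Qed.

End FrobeniusReduction.

Lemma contains_Fq_gt1 (R : nzRingType) q : contains_Fq R q -> (1 < q)%N.
Proof.
case=> F [_ <-]; apply/card_gt1P; exists 0, 1; split => //.
by rewrite eq_sym oner_neq0.
Qed.

Lemma map_unitmx_solve (R : comUnitRingType) (L : fieldType)
    (iota : {rmorphism R -> L}) n (A : 'M[R]_n) (Y X : 'cV[L]_n) :
  A \in unitmx -> map_mx iota A *m Y = X -> Y = map_mx iota (invmx A) *m X.
Proof. by move=> Au <-; rewrite mulmxA -map_mxM mulVmx // map_mx1 mul1mx. Qed.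

Unset Implicit Arguments.
Theorem proposition2p12 (R : idomainType) (q n : nat)
  (L : fieldType) (iota : {rmorphism R -> L})
  (hnoeth : noetherian R) (hFq : contains_Fq R q)
  (hL : is_sep_closure_of_frac iota)
  (A : 'M[R]_n) (hA : A \in unitmx)
  (X : 'cV[L]_n)
  (hX : map_mx iota A *m map_mx (fun x : L => x ^+ q) X = X) :
  forall i : 'I_n, integral_over iota (X i ord0).
Proof.
apply: (integral_over_frobenius_fixed (contains_Fq_gt1 hFq) (B := invmx A)) => j.
have /matrixP/(_ j ord0) := map_unitmx_solve hA hX.
by rewrite !mxE => ->; apply: eq_bigr => k _; rewrite !mxE.
Qed.
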